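(* For each $n\in\mathbb{N}$ let $L_n\in\{n-1,n\}$ and let $S_{\mathbf{a}^n}$ be a linear binary subdivision scheme of the form \[ (S_{\mathbf{a}^n} \mathbf{f})_{2j} = \sum_{l=1-n}^{L_n} a^{n,0}_{l} f_{j+l}, \qquad (S_{\mathbf{a}^n} \mathbf{f})_{2j + 1} = \sum_{l=1-n}^{L_n+1} a^{n,1}_{l} f_{j+l}, \qquad j\in\mathbb{Z}, \] which is odd-symmetric, i.e. $a^{n,0}_l=a^{n,0}_{L_n+1-n-l}$ for $l=1-n,\ldots,L_n$ and $a^{n,1}_l=a^{n,1}_{L_n+2-n-l}$ for $l=1-n,\ldots,L_n+1$, and which reproduces constants: $\sum_{l} a^{n,0}_l=\sum_{l} a^{n,1}_l=1$. Let $r:[-1,1]\to\mathbb{R}$ be $\mathcal{C}^1$, $R(t):=\int_{-1}^t r(s)\,ds$, and assume there are $\alpha>2$, $\mu>0$ such that for all $n$ and all $j=1-n,\ldots,L_n$, \[ a^{n,0}_{j} - a^{n,1}_{j} = r(j/n)\,n^{-2} + \varepsilon^n_j, \qquad |\varepsilon^n_j| \leq \mu n^{-\alpha}, \] and $\int_{-1}^1|R(t)|\,dt<1$. Then there exists $n_0$ such that $S_{\mathbf{a}^n}$ is (uniformly) convergent for every $n>n_0$. If moreover $\alpha=3$, one may take, with $\|R\|_1=\int_{-1}^1|R|$, $\|r\|_\infty=\max_{[-1,1]}|r|$, $\|r'\|_\infty=\max_{[-1,1]}|r'|$ and $B=\|r\|_\infty+2(\mu+\|r'\|_\infty)$, \[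 n_0=\frac{\sqrt{B^2+4(\|R\|_1-1)(\mu+\|r'\|_\infty)}+B}{2(1-\|R\|_1)} \ \text{ if } L_n=n-1, \qquad n_0=\frac{\sqrt{B^2+4(1-\|R\|_1)\mu}+B}{2(1-\|R\|_1)} \ \text{ if } L_n=n. \]
   Context: A subdivision scheme $S$ is (uniformly) convergent if for every bounded real sequence $\mathbf{f}^0$ there is a continuous $F:\mathbb{R}\to\mathbb{R}$ with $\lim_{k\to\infty}\sup_{j\in\mathbb{Z}}|(S^k\mathbf{f}^0)_j-F(2^{-k}j)|=0$. *)

From Stdlib Require Import Reals ZArith List Lra Lia.
From Coquelicot Require Import Coquelicot.
Open Scope R_scope.

(* sumZ lo hi g = sum_{l = lo}^{hi} g l  (empty if hi < lo) *)
Definition sumZ (lo hi : Z) (g : Z -> R) : R :=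
  fold_right Rplus 0
    (map (fun k : nat => g (lo + Z.of_nat k)%Z) (seq 0 (Z.to_nat (hi - lo + 1)))).

Definition subdiv (lo hi0 hi1 : Z) (a0 a1 : Z -> R) (f : Z -> R) : Z -> R :=
  fun i : Z =>
    if Z.even i
    then sumZ lo hi0 (fun l => a0 l * f (Z.div i 2 + l)%Z)
    else sumZ lo hi1 (fun l => a1 l * f (Z.div i 2 + l)%Z).

Definition bounded_seq (f : Z -> R) : Prop :=
  exists M : R, forall j : Z, Rabs (f j) <= M.

Definition convergent_scheme (S : (Z -> R) -> (Z -> R)) : Prop :=
  forall f0 : Z -> R, bounded_seq f0 ->
    exists F : R -> R, continuity F /\
      forall eps : R, 0 < eps -> exists K : nat, forall k : nat, (K <= k)%nat ->
        forall j : Z, Rabs (Nat.iter k S f0 j - F (IZR j / 2 ^ k)) <= eps.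

Definition in_I (x : R) : Prop := -1 <= x <= 1.

Definition has_deriv_within (D : R -> Prop) (f : R -> R) (x l : R) : Prop :=
  forall eps : R, 0 < eps -> exists delta : R, 0 < delta /\
    forall y : R, D y -> Rabs (y - x) < delta ->
      Rabs (f y - f x - l * (y - x)) <= eps * Rabs (y - x).

Definition continuous_within (D : R -> Prop) (f : R -> R) (x : R) : Prop :=
  forall eps : R, 0 < eps -> exists delta : R, 0 < delta /\
    forall y : R, D y -> Rabs (y - x) < delta -> Rabs (f y - f x) <= eps.

Definition C1_on_I (r dr : R -> R) : Prop :=
  (forall x, in_I x -> has_deriv_within in_I r x (dr x)) /\
  (forall x, in_I x -> continuous_within in_I dr x).

Definition is_max_abs_on_I (g : R -> R) (m : R) : Prop :=
  (exists x, in_I x /\ Rabs (g x) = m) /\ (forall x, in_I x -> Rabs (g x) <= m).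

(* Write d_j = a^{n,0}_j - a^{n,1}_j.  Since both masks reproduce constants, summation by
   parts shows that one step of S_{a^n} multiplies the sup-norm of the first differences of
   the data by at most gamma_n = sum_k |sum_{j <= k} d_j| on the even-to-odd differences, and
   odd symmetry reflects the odd-to-even differences onto these.  A scheme contracting first
   differences by a factor < 1 is convergent: the piecewise constant interpolants of S^k f
   form a geometric Cauchy sequence.  As d_j = r(j/n)/n^2 + eps_j, the inner sums are R(x_k)/n
   up to Riemann-sum errors, x_k = -1 + k/n, so gamma_n <= ||R||_1 + O(1/n) + O(n^(2-alpha)),
   which is < 1 for n large.  For alpha = 3 all error terms are explicit and gamma_n < 1
   reduces to a quadratic inequality in n, whose larger root is the stated n_0. *)

From Stdlib Require Import Reals ZArith List Lra Lia.
From Coquelicot Require Import Coquelicot.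
Open Scope R_scope.

Fixpoint sumN (N : nat) (h : nat -> R) : R :=
  match N with O => 0 | S N' => sumN N' h + h N' end.

Lemma sumN_ext N h1 h2 :
  (forall k, (k < N)%nat -> h1 k = h2 k) -> sumN N h1 = sumN N h2.
Proof. induction N; intros H; simpl; [|rewrite IHN, H]; auto. Qed.

Lemma sumN_plus N h1 h2 : sumN N (fun k => h1 k + h2 k) = sumN N h1 + sumN N h2.
Proof. induction N; simpl; lra. Qed.

Lemma sumN_minus N h1 h2 : sumN N (fun k => h1 k - h2 k) = sumN N h1 - sumN N h2.
Proof. induction N; simpl; lra. Qed.

Lemma sumN_mult_l N c h : sumN N (fun k => c * h k) = c * sumN N h.
Proof. induction N; simpl; lra. Qed.

Lemma sumN_const N c : sumN N (fun _ => c) = INR N * c.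
Proof. induction N; [simpl; lra|]. rewrite S_INR. simpl sumN. lra. Qed.

Lemma sumN_le N h1 h2 :
  (forall k, (k < N)%nat -> h1 k <= h2 k) -> sumN N h1 <= sumN N h2.
Proof.
  induction N; intros H; simpl; [lra|].
  apply Rplus_le_compat; auto.
Qed.

Lemma sumN_nonneg N h : (forall k, (k < N)%nat -> 0 <= h k) -> 0 <= sumN N h.
Proof.
  intros H. rewrite <- (Rmult_0_r (INR N)), <- sumN_const. exact (sumN_le _ _ _ H).
Qed.

Lemma Rabs_sumN N h : Rabs (sumN N h) <= sumN N (fun k => Rabs (h k)).
Proof.
  induction N; simpl; [rewrite Rabs_R0; lra|].
  eapply Rle_trans; [apply Rabs_triang|lra].
Qed.

Lemma sumN_Sn N h : sumN (S N) h = h O + sumN N (fun k => h (S k)).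
Proof. induction N; [simpl; lra|]. change (sumN (S (S N)) h) with (sumN (S N) h + h (S N)).
  rewrite IHN. simpl. lra. Qed.

Lemma sumN_rev N h : sumN N h = sumN N (fun k => h (N - 1 - k)%nat).
Proof.
  induction N; [reflexivity|].
  rewrite (sumN_Sn N (fun k => h (S N - 1 - k)%nat)).
  change (sumN (S N) h) with (sumN N h + h N). rewrite IHN, Rplus_comm.
  replace (S N - 1 - 0)%nat with N by lia.
  f_equal. apply sumN_ext. intros k _. f_equal. lia.
Qed.

Lemma sumN_INR_S N : sumN N (fun k => INR (S k)) = INR N * (INR N + 1) / 2.
Proof.
  induction N; [simpl; lra|].
  change (sumN (S N) _) with (sumN N (fun k => INR (S k)) + INR (S N)). rewrite IHN, S_INR. lra.
Qed.

Lemma fold_right_map_seq N h :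
  fold_right Rplus 0 (map h (seq 0 N)) = sumN N h.
Proof.
  revert h; induction N; intros h; [reflexivity|].
  rewrite sumN_Sn. simpl. rewrite <- seq_shift, map_map, IHN. reflexivity.
Qed.

Lemma sumZ_sumN lo hi g :
  sumZ lo hi g = sumN (Z.to_nat (hi - lo + 1)) (fun k => g (lo + Z.of_nat k)%Z).
Proof. apply fold_right_map_seq. Qed.

Lemma Zfloor_half x : (Zfloor (2 * x) / 2)%Z = Zfloor x.
Proof.
  symmetry. apply Zfloor_eq.
  set (p := Zfloor (2 * x)). pose proof (Zfloor_bound (2 * x)) as Hp. fold p in Hp.
  assert (Hdiv : IZR p = 2 * IZR (p / 2) + IZR (p mod 2)).
  { rewrite <- mult_IZR, <- plus_IZR, <- Z.div_mod by lia. reflexivity. }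
  assert (0 <= IZR (p mod 2) <= 1).
  { pose proof (Z.mod_pos_bound p 2). split; apply IZR_le; lia. }
  lra.
Qed.

Lemma Zfloor_close x y : Rabs (x - y) < 1 -> (Z.abs (Zfloor x - Zfloor y) <= 1)%Z.
Proof.
  intros Hxy. apply Rabs_def2 in Hxy.
  pose proof (Zfloor_bound x). pose proof (Zfloor_bound y).
  assert (Hxy2 : IZR (Zfloor x) < IZR (Zfloor y + 2)) by (rewrite plus_IZR; lra).
  assert (Hyx2 : IZR (Zfloor y) < IZR (Zfloor x + 2)) by (rewrite plus_IZR; lra).
  apply lt_IZR in Hxy2. apply lt_IZR in Hyx2. lia.
Qed.

Lemma Zfloor_scaled_close s x y :
  0 < s -> Rabs (y - x) < / s -> (Z.abs (Zfloor (s * y) - Zfloor (s * x)) <= 1)%Z.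
Proof.
  intros Hs Hxy. apply Zfloor_close.
  rewrite <- Rmult_minus_distr_l, Rabs_mult, (Rabs_pos_eq s) by lra.
  apply (Rmult_lt_compat_l s) in Hxy; [|exact Hs]. rewrite Rinv_r in Hxy; lra.
Qed.

Definition diff_le (f : Z -> R) (d : R) : Prop :=
  forall i : Z, Rabs (f (i + 1)%Z - f i) <= d.

Lemma diff_le_nonneg f d : diff_le f d -> 0 <= d.
Proof. intros H. eapply Rle_trans; [apply Rabs_pos|apply (H 0%Z)]. Qed.

Lemma diff_le_bounded f M : (forall j, Rabs (f j) <= M) -> diff_le f (2 * M).
Proof.
  intros HM i. unfold Rminus. eapply Rle_trans; [apply Rabs_triang|].
  rewrite Rabs_Ropp. pose proof (HM (i + 1)%Z). pose proof (HM i). lra.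
Qed.

Lemma diff_le_shift_nat f d q (m : nat) :
  diff_le f d -> Rabs (f (q + Z.of_nat m)%Z - f q) <= INR m * d.
Proof.
  intros H. induction m.
  - rewrite Z.add_0_r, Rminus_diag, Rabs_R0. simpl; lra.
  - rewrite S_INR, Nat2Z.inj_succ, <- Z.add_1_r, Z.add_assoc.
    replace (f (q + Z.of_nat m + 1)%Z - f q) with
      ((f (q + Z.of_nat m + 1)%Z - f (q + Z.of_nat m)%Z) + (f (q + Z.of_nat m)%Z - f q)) by ring.
    eapply Rle_trans; [apply Rabs_triang|]. specialize (H (q + Z.of_nat m)%Z). lra.
Qed.

Lemma diff_le_shift f d q m :
  diff_le f d -> Rabs (f (q + m)%Z - f q) <= IZR (Z.abs m) * d.
Proof.
  intros H. destruct (Z_le_gt_dec 0 m).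
  - pose proof (diff_le_shift_nat f d q (Z.to_nat m) H) as Hm.
    rewrite INR_IZR_INZ, Z2Nat.id in Hm by lia. rewrite Z.abs_eq by lia. exact Hm.
  - pose proof (diff_le_shift_nat f d (q + m) (Z.to_nat (- m)) H) as Hm.
    rewrite Z2Nat.id in Hm by lia. rewrite INR_IZR_INZ, Z2Nat.id in Hm by lia.
    replace (q + m + - m)%Z with q in Hm by lia.
    rewrite Rabs_minus_sym, Z.abs_neq by lia. exact Hm.
Qed.

Lemma diff_le_adjacent f d i j :
  diff_le f d -> (Z.abs (i - j) <= 1)%Z -> Rabs (f i - f j) <= d.
Proof.
  intros H Hij. pose proof (diff_le_shift f d j (i - j) H) as Hs.
  replace (j + (i - j))%Z with i in Hs by lia.
  pose proof (diff_le_nonneg f d H). apply IZR_le in Hij. nra.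
Qed.

Lemma is_lim_seq_geom_scal c g : 0 <= g < 1 -> is_lim_seq (fun k => c * g ^ k) 0.
Proof.
  intros Hg. replace (Finite 0) with (Rbar_mult c 0) by (simpl; f_equal; ring).
  apply is_lim_seq_scal_l, is_lim_seq_geom. rewrite Rabs_pos_eq; lra.
Qed.

Lemma is_lim_seq_eventually_lt b e :
  is_lim_seq b 0 -> 0 < e -> exists K : nat, forall k, (K <= k)%nat -> b k < e.
Proof.
  intros Hb He. apply is_lim_seq_spec in Hb. destruct (Hb (mkposreal e He)) as [K HK].
  exists K. intros k Hk. specialize (HK k Hk). simpl in HK. apply Rabs_def2 in HK. lra.
Qed.

Lemma geometric_cauchy_limit (G : nat -> R -> R) c g :
  0 <= c -> 0 <= g < 1 ->
  (forall k x, Rabs (G (S k) x - G k x) <= c * g ^ k) ->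
  exists F : R -> R, forall k x, Rabs (G k x - F x) <= c / (1 - g) * g ^ k.
Proof.
  intros Hc Hg Hstep. set (T := c / (1 - g)).
  assert (HT : 0 <= T) by (apply Rdiv_le_0_compat; lra).
  assert (Htail : forall k p x, Rabs (G (p + k)%nat x - G k x) <= T * g ^ k * (1 - g ^ p)).
  { intros k p x. induction p.
    - simpl. rewrite Rminus_diag, Rabs_R0. lra.
    - replace (G (S p + k)%nat x - G k x)
        with ((G (S (p + k)) x - G (p + k)%nat x) + (G (p + k)%nat x - G k x)) by (simpl; ring).
      eapply Rle_trans; [apply Rabs_triang|].
      eapply Rle_trans; [apply Rplus_le_compat; [apply Hstep|apply IHp]|].
      right. unfold T. rewrite pow_add. simpl. field. lra. }
  assert (Hbound : forall k m x, (k <= m)%nat -> Rabs (G m x - G k x) <= T * g ^ k).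
  { intros k m x Hkm. replace m with (m - k + k)%nat by lia.
    eapply Rle_trans; [apply Htail|].
    assert (0 <= T * g ^ k) by (apply Rmult_le_pos; [|apply pow_le]; lra).
    pose proof (pow_le g (m - k) ltac:(lra)). nra. }
  assert (Hcv : forall x, ex_finite_lim_seq (fun k => G k x)).
  { intros x. apply ex_lim_seq_cauchy_corr. intros e.
    destruct (is_lim_seq_eventually_lt (fun k => 2 * T * g ^ k) e) as [K HK].
    { apply is_lim_seq_geom_scal; lra. } { apply cond_pos. }
    exists K. intros n m Hn Hm. specialize (HK K (le_n K)).
    replace (G n x - G m x) with ((G n x - G K x) - (G m x - G K x)) by ring.
    eapply Rle_lt_trans; [apply Rabs_triang|]. rewrite Rabs_Ropp.
    pose proof (Hbound K n x Hn). pose proof (Hbound K m x Hm). lra. }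
  exists (fun x => real (Lim_seq (fun k => G k x))). intros k x.
  assert (Hlim : is_lim_seq (fun m => Rabs (G m x - G k x))
                   (Rabs (real (Lim_seq (fun m => G m x)) - G k x))).
  { apply (is_lim_seq_abs _ (Finite _)), is_lim_seq_minus'; [|apply is_lim_seq_const].
    destruct (Hcv x) as [l Hl]. rewrite (is_lim_seq_unique _ _ Hl). exact Hl. }
  rewrite Rabs_minus_sym. fold T.
  apply (is_lim_seq_le_loc _ (fun _ => T * g ^ k) _ _ (ex_intro _ k (fun m Hm => Hbound k m x Hm))
           Hlim (is_lim_seq_const _)).
Qed.

Lemma continuity_of_uniform_limit (G : nat -> R -> R) (F : R -> R) (b delta : nat -> R) :
  is_lim_seq b 0 -> (forall k, 0 < delta k) ->
  (forall k x, Rabs (G k x - F x) <= b k) ->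
  (forall k x y, Rabs (y - x) < delta k -> Rabs (G k y - G k x) <= b k) ->
  continuity F.
Proof.
  intros Hb Hdelta HGF Hosc x e He.
  destruct (is_lim_seq_eventually_lt b (e / 3) Hb) as [K HK]; [lra|].
  exists (delta K). split; [apply Hdelta|]. intros y [_ Hy]. simpl in *. unfold R_dist in *.
  specialize (HK K (le_n K)).
  pose proof (HGF K y). pose proof (HGF K x). pose proof (Hosc K x y Hy).
  replace (F y - F x) with (- (G K y - F y) + (G K y - G K x) + (G K x - F x)) by ring.
  eapply Rle_lt_trans.
  { eapply Rle_trans; [apply Rabs_triang|apply Rplus_le_compat_r, Rabs_triang]. }
  rewrite Rabs_Ropp. lra.
Qed.

Section ContractiveScheme.

Variable scheme : (Z -> R) -> Z -> R.
Variables gamma C : R.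
Hypothesis gamma_range : 0 <= gamma < 1.
Hypothesis C_nonneg : 0 <= C.
Hypothesis scheme_diff_le : forall f d, diff_le f d -> diff_le (scheme f) (gamma * d).
Hypothesis scheme_local : forall f d, diff_le f d ->
  forall i, Rabs (scheme f i - f (i / 2)%Z) <= C * d.

Theorem convergent_of_contractive : convergent_scheme scheme.
Proof.
  intros f0 [M HM].
  set (d0 := 2 * M). assert (Hd0 : diff_le f0 d0) by (apply diff_le_bounded, HM).
  pose proof (diff_le_nonneg _ _ Hd0) as Hd0pos.
  set (fk k := Nat.iter k scheme f0).
  assert (Hfk : forall k, diff_le (fk k) (gamma ^ k * d0)).
  { induction k; simpl.
    - rewrite Rmult_1_l. exact Hd0.
    - rewrite Rmult_assoc. apply scheme_diff_le, IHk. }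
  set (G k x := fk k (Zfloor (2 ^ k * x))).
  assert (Hstep : forall k x, Rabs (G (S k) x - G k x) <= C * d0 * gamma ^ k).
  { intros k x. unfold G. replace (2 ^ S k * x) with (2 * (2 ^ k * x)) by (simpl; ring).
    rewrite <- (Zfloor_half (2 ^ k * x)), Rmult_assoc, (Rmult_comm d0).
    apply scheme_local, Hfk. }
  destruct (geometric_cauchy_limit G (C * d0) gamma) as [F HF]; auto.
  { apply Rmult_le_pos; auto. }
  set (T := C * d0 / (1 - gamma)) in HF.
  assert (HT : 0 <= T) by (apply Rdiv_le_0_compat; [apply Rmult_le_pos|]; lra).
  exists F. split.
  - apply (continuity_of_uniform_limit G F (fun k => (T + d0) * gamma ^ k) (fun k => / 2 ^ k)).
    + apply is_lim_seq_geom_scal, gamma_range.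
    + intros k. apply Rinv_0_lt_compat, pow_lt. lra.
    + intros k x. pose proof (HF k x). pose proof (pow_le gamma k ltac:(lra)). nra.
    + intros k x y Hxy. unfold G. apply Rle_trans with (gamma ^ k * d0).
      * apply diff_le_adjacent; [apply Hfk|].
        apply Zfloor_scaled_close; [apply pow_lt; lra|exact Hxy].
      * pose proof (pow_le gamma k ltac:(lra)). nra.
  - intros e He.
    destruct (is_lim_seq_eventually_lt (fun k => T * gamma ^ k) e) as [K HK]; auto.
    { apply is_lim_seq_geom_scal, gamma_range. }
    exists K. intros k Hk j. left.
    replace (Nat.iter k scheme f0 j) with (G k (IZR j / 2 ^ k)).
    { eapply Rle_lt_trans; [apply HF|apply HK, Hk]. }
    unfold G. replace (2 ^ k * (IZR j / 2 ^ k)) with (IZR j) by (field; apply pow_nonzero; lra).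
    rewrite ZfloorZ. reflexivity.
Qed.

End ContractiveScheme.

Lemma subdiv_even lo hi0 hi1 a0 a1 f q :
  subdiv lo hi0 hi1 a0 a1 f (2 * q)%Z = sumZ lo hi0 (fun l => a0 l * f (q + l)%Z).
Proof.
  unfold subdiv. rewrite Z.even_mul, Z.mul_comm, Z.div_mul by lia. reflexivity.
Qed.

Lemma subdiv_odd lo hi0 hi1 a0 a1 f q :
  subdiv lo hi0 hi1 a0 a1 f (2 * q + 1)%Z = sumZ lo hi1 (fun l => a1 l * f (q + l)%Z).
Proof.
  unfold subdiv. rewrite Z.even_add, Z.even_mul, Z.mul_comm, Z.div_add_l by lia.
  rewrite Z.add_0_r. reflexivity.
Qed.

Lemma sumN_by_parts N (A0 A1 g : nat -> R) :
  sumN (S N) (fun k => A1 k * g k) - sumN N (fun k => A0 k * g k) =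
  (sumN (S N) A1 - sumN N A0) * g N +
  sumN N (fun k => sumN (S k) (fun j => A0 j - A1 j) * (g (S k) - g k)).
Proof.
  induction N; [simpl; ring|].
  change (sumN (S (S N)) ?h) with (sumN (S N) h + h (S N)).
  change (sumN (S N) (fun k => A0 k * g k)) with (sumN N (fun k => A0 k * g k) + A0 N * g N).
  change (sumN (S N) A0) with (sumN N A0 + A0 N).
  change (sumN (S N) (fun k => sumN (S k) _ * _)) with
    (sumN N (fun k => sumN (S k) (fun j => A0 j - A1 j) * (g (S k) - g k)) +
     sumN (S N) (fun j => A0 j - A1 j) * (g (S N) - g N)).
  rewrite sumN_minus. change (sumN (S N) A0) with (sumN N A0 + A0 N). lra.
Qed.

Definition diff_factor (N : nat) (A0 A1 : nat -> R) : R :=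
  sumN N (fun k => Rabs (sumN (S k) (fun j => A0 j - A1 j))).

Lemma diff_factor_nonneg N A0 A1 : 0 <= diff_factor N A0 A1.
Proof. apply sumN_nonneg. intros; apply Rabs_pos. Qed.

(* Both masks reproduce constants, so the boundary term of the summation by parts vanishes. *)
Lemma masks_diff_le N (A0 A1 g : nat -> R) d :
  sumN (S N) A1 = 1 -> sumN N A0 = 1 ->
  (forall k, (k < N)%nat -> Rabs (g (S k) - g k) <= d) ->
  Rabs (sumN (S N) (fun k => A1 k * g k) - sumN N (fun k => A0 k * g k))
    <= diff_factor N A0 A1 * d.
Proof.
  intros H1 H0 Hg. rewrite sumN_by_parts, H1, H0, Rminus_diag, Rmult_0_l, Rplus_0_l.
  eapply Rle_trans; [apply Rabs_sumN|]. unfold diff_factor.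
  rewrite Rmult_comm, <- sumN_mult_l. apply sumN_le. intros k Hk.
  rewrite Rabs_mult, Rmult_comm. apply Rmult_le_compat_r; auto using Rabs_pos.
Qed.

Definition mask_moment (M : nat) (A : nat -> R) (lo : Z) : R :=
  sumN M (fun k => Rabs (A k) * IZR (Z.abs (lo + Z.of_nat k))).

Lemma mask_moment_nonneg M A lo : 0 <= mask_moment M A lo.
Proof. apply sumN_nonneg. intros; apply Rmult_le_pos; [apply Rabs_pos|apply IZR_le; lia]. Qed.

Lemma mask_local M (A : nat -> R) lo f d q :
  sumN M A = 1 -> diff_le f d ->
  Rabs (sumN M (fun k => A k * f (q + (lo + Z.of_nat k))%Z) - f q) <= mask_moment M A lo * d.
Proof.
  intros HA Hf. unfold mask_moment.
  replace (f q) with (sumN M (fun k => A k * f q)).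
  2: { rewrite (sumN_ext _ _ (fun k => f q * A k)) by (intros; ring).
       rewrite sumN_mult_l, HA. ring. }
  rewrite <- sumN_minus. eapply Rle_trans; [apply Rabs_sumN|].
  rewrite Rmult_comm, <- sumN_mult_l. apply sumN_le. intros k _.
  rewrite <- Rmult_minus_distr_l, Rabs_mult.
  replace (d * (Rabs (A k) * IZR (Z.abs (lo + Z.of_nat k))))
    with (Rabs (A k) * (IZR (Z.abs (lo + Z.of_nat k)) * d)) by ring.
  apply Rmult_le_compat_l; [apply Rabs_pos|apply diff_le_shift, Hf].
Qed.

Section OddSymmetricScheme.

Variables (lo hi : Z) (N : nat) (a0 a1 : Z -> R).
Hypothesis hi_def : hi = (lo + Z.of_nat N - 1)%Z.
Let A0 k := a0 (lo + Z.of_nat k)%Z.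
Let A1 k := a1 (lo + Z.of_nat k)%Z.
Hypothesis A0_sum : sumN N A0 = 1.
Hypothesis A1_sum : sumN (S N) A1 = 1.
Hypothesis A0_sym : forall k, (k < N)%nat -> A0 (N - 1 - k)%nat = A0 k.
Hypothesis A1_sym : forall k, (k <= N)%nat -> A1 (N - k)%nat = A1 k.

Let subdiv_even_sumN f q :
  subdiv lo hi (hi + 1) a0 a1 f (2 * q)%Z = sumN N (fun k => A0 k * f (q + (lo + Z.of_nat k))%Z).
Proof. rewrite subdiv_even, sumZ_sumN. f_equal. lia. Qed.

Let subdiv_odd_sumN f q :
  subdiv lo hi (hi + 1) a0 a1 f (2 * q + 1)%Z
  = sumN (S N) (fun k => A1 k * f (q + (lo + Z.of_nat k))%Z).
Proof. rewrite subdiv_odd, sumZ_sumN. f_equal. lia. Qed.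

Lemma subdiv_diff_le f d :
  diff_le f d -> diff_le (subdiv lo hi (hi + 1) a0 a1 f) (diff_factor N A0 A1 * d).
Proof.
  intros Hf i. destruct (Z_modulo_2 i) as [[q ->]|[q ->]].
  - rewrite subdiv_odd_sumN, subdiv_even_sumN.
    apply masks_diff_le; auto. intros k _.
    replace (q + (lo + Z.of_nat (S k)))%Z with (q + (lo + Z.of_nat k) + 1)%Z by lia. apply Hf.
  - replace (2 * q + 1 + 1)%Z with (2 * (q + 1))%Z by lia.
    rewrite subdiv_odd_sumN, subdiv_even_sumN, sumN_rev, (sumN_rev (S N)).
    set (h k := f (q + lo + Z.of_nat N - Z.of_nat k)%Z).
    rewrite (sumN_ext N _ (fun k => A0 k * h k)).
    2: { intros k Hk. rewrite <- (A0_sym k Hk). unfold A0, h. f_equal; f_equal; lia. }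
    rewrite (sumN_ext (S N) _ (fun k => A1 k * h k)).
    2: { intros k Hk. replace (S N - 1 - k)%nat with (N - k)%nat by lia.
         rewrite <- (A1_sym k) by lia. unfold A1, h. f_equal; f_equal; lia. }
    rewrite <- Rabs_Ropp, Ropp_minus_distr.
    apply masks_diff_le; auto. intros k _. unfold h. rewrite Rabs_minus_sym.
    replace (q + lo + Z.of_nat N - Z.of_nat k)%Z
      with (q + lo + Z.of_nat N - Z.of_nat (S k) + 1)%Z by lia. apply Hf.
Qed.

Lemma subdiv_local f d i :
  diff_le f d ->
  Rabs (subdiv lo hi (hi + 1) a0 a1 f i - f (i / 2)%Z)
  <= (mask_moment N A0 lo + mask_moment (S N) A1 lo) * d.
Proof.
  intros Hf. pose proof (diff_le_nonneg f d Hf).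
  pose proof (mask_moment_nonneg N A0 lo). pose proof (mask_moment_nonneg (S N) A1 lo).
  destruct (Z_modulo_2 i) as [[q ->]|[q ->]].
  - rewrite subdiv_even_sumN, Z.mul_comm, Z.div_mul by lia.
    eapply Rle_trans; [apply mask_local with (d := d); auto|apply Rmult_le_compat_r; lra].
  - rewrite subdiv_odd_sumN, Z.mul_comm, Z.div_add_l by lia. rewrite Z.add_0_r.
    eapply Rle_trans; [apply mask_local with (d := d); auto|apply Rmult_le_compat_r; lra].
Qed.

Theorem subdiv_convergent :
  diff_factor N A0 A1 < 1 -> convergent_scheme (subdiv lo hi (hi + 1) a0 a1).
Proof.
  intros Hgamma.
  apply (convergent_of_contractive _ (diff_factor N A0 A1)
           (mask_moment N A0 lo + mask_moment (S N) A1 lo)).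
  - split; [apply diff_factor_nonneg|exact Hgamma].
  - apply Rplus_le_le_0_compat; apply mask_moment_nonneg.
  - apply subdiv_diff_le.
  - intros f d Hf i. apply subdiv_local, Hf.
Qed.

End OddSymmetricScheme.

Definition lipschitz (g : R -> R) (K : R) : Prop :=
  forall x y, Rabs (g x - g y) <= K * Rabs (x - y).

Lemma lipschitz_nonneg g K : lipschitz g K -> 0 <= K.
Proof.
  intros H. specialize (H 1 0). rewrite Rminus_0_r, Rabs_R1, Rmult_1_r in H.
  eapply Rle_trans; [apply Rabs_pos|exact H].
Qed.

Lemma lipschitz_continuous g K : lipschitz g K -> forall x, continuous g x.
Proof.
  intros H x. pose proof (lipschitz_nonneg g K H) as HK.
  apply continuity_pt_filterlim. intros e He.
  exists (e / (K + 1)). split; [apply Rdiv_lt_0_compat; lra|].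
  intros y [_ Hy]. simpl in *. unfold R_dist in *.
  eapply Rle_lt_trans; [apply H|].
  apply Rle_lt_trans with (K * (e / (K + 1))); [apply Rmult_le_compat_l; lra|].
  replace e with ((K + 1) * (e / (K + 1))) at 2 by (field; lra).
  apply Rmult_lt_compat_r; [apply Rdiv_lt_0_compat|]; lra.
Qed.

Lemma ex_RInt_lipschitz g K a b : lipschitz g K -> ex_RInt g a b.
Proof.
  intros H. apply (ex_RInt_continuous (V := R_CompleteNormedModule)).
  intros z _. exact (lipschitz_continuous g K H z).
Qed.

Lemma lipschitz_abs g K : lipschitz g K -> lipschitz (fun x => Rabs (g x)) K.
Proof. intros H x y. eapply Rle_trans; [apply Rabs_triang_inv2|apply H]. Qed.

Lemma lipschitz_const_minus g K c : lipschitz g K -> lipschitz (fun x => c - g x) K.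
Proof.
  intros H x y. replace (c - g x - (c - g y)) with (- (g x - g y)) by ring.
  rewrite Rabs_Ropp. apply H.
Qed.

Lemma lipschitz_scaled_distance K b : lipschitz (fun s => K * (b - s)) (Rabs K).
Proof.
  intros x y. replace (K * (b - x) - K * (b - y)) with (K * (y - x)) by ring.
  rewrite Rabs_mult, (Rabs_minus_sym y). lra.
Qed.

Lemma RInt_lipschitz g M a :
  (forall x, Rabs (g x) <= M) -> (forall u v, ex_RInt g u v) ->
  lipschitz (fun t => RInt g a t) M.
Proof.
  intros Hb Hi x y.
  assert (Hsplit : RInt g a x = RInt g a y + RInt g y x)
    by (symmetry; exact (RInt_Chasles (V := R_CompleteNormedModule) g a y x (Hi _ _) (Hi _ _))).
  rewrite Hsplit. replace (RInt g a y + RInt g y x - RInt g a y) with (RInt g y x : R) by lra.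
  destruct (Rle_dec y x).
  - rewrite (Rabs_pos_eq (x - y)) by lra. rewrite Rmult_comm.
    apply abs_RInt_le_const; auto.
  - rewrite <- (opp_RInt_swap (V := R_CompleteNormedModule) g x y (Hi _ _)).
    rewrite (Rabs_left (x - y)) by lra.
    change opp with Ropp. rewrite Rabs_Ropp.
    replace (M * - (x - y)) with ((y - x) * M) by ring.
    apply abs_RInt_le_const; auto; lra.
Qed.

Lemma RInt_distance_to_right_end K a b :
  a <= b -> RInt (fun s => K * (b - s)) a b = K * (b - a) ^ 2 / 2.
Proof.
  intros Hab. apply is_RInt_unique.
  replace (K * (b - a) ^ 2 / 2) with (minus (- K * (b - b) ^ 2 / 2) (- K * (b - a) ^ 2 / 2))
    by (unfold minus, plus, opp; simpl; field).
  apply (is_RInt_derive (V := R_CompleteNormedModule) (fun s => - K * (b - s) ^ 2 / 2)).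
  - intros x _. auto_derive; [auto|field].
  - intros x _. exact (lipschitz_continuous _ _ (lipschitz_scaled_distance K b) x).
Qed.

(* Right-endpoint rule on one cell: [|g b - g s| <= K (b - s)] integrates to [K (b - a)^2 / 2]. *)
Lemma right_endpoint_error g K a b :
  a <= b -> lipschitz g K ->
  Rabs ((b - a) * g b - RInt g a b) <= K * (b - a) ^ 2 / 2.
Proof.
  intros Hab Hg.
  assert (Hdiff : lipschitz (fun s => g b - g s) K) by (apply lipschitz_const_minus, Hg).
  replace ((b - a) * g b - RInt g a b) with (RInt (fun s => g b - g s) a b).
  2: { apply is_RInt_unique, (is_RInt_minus (V := R_CompleteNormedModule) (fun _ => g b) g).
       - apply (is_RInt_const (V := R_CompleteNormedModule)).
       - apply (RInt_correct (V := R_CompleteNormedModule)), (ex_RInt_lipschitz g K), Hg. }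
  eapply Rle_trans; [apply abs_RInt_le; [exact Hab|apply (ex_RInt_lipschitz _ K), Hdiff]|].
  rewrite <- RInt_distance_to_right_end by exact Hab.
  apply RInt_le; [exact Hab|apply (ex_RInt_lipschitz _ K), lipschitz_abs, Hdiff| |].
  - apply (ex_RInt_lipschitz _ _ _ _ (lipschitz_scaled_distance K b)).
  - intros x Hx. replace (K * (b - x)) with (K * Rabs (b - x)) by (rewrite Rabs_pos_eq; lra).
    apply Hg.
Qed.

Definition grid (n j : nat) : R := -1 + INR j / INR n.

Lemma grid_S n j : (1 <= n)%nat -> grid n (S j) - grid n j = / INR n.
Proof.
  intros Hn. assert (1 <= INR n) by (apply (le_INR 1); auto).
  unfold grid. rewrite S_INR. field. lra.
Qed.

Lemma grid_in_I n j : (1 <= n)%nat -> (j <= 2 * n)%nat -> in_I (grid n j).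
Proof.
  intros Hn Hj. assert (1 <= INR n) by (apply (le_INR 1), Hn).
  apply le_INR in Hj. rewrite mult_INR in Hj. simpl (INR 2) in Hj.
  assert (0 <= INR j / INR n <= 2).
  { split; [apply Rdiv_le_0_compat; [apply pos_INR|lra]|].
    apply Rle_div_l; lra. }
  unfold in_I, grid. lra.
Qed.

Lemma riemann_sum_error g K n p :
  (1 <= n)%nat -> lipschitz g K ->
  Rabs (sumN p (fun j => g (grid n (S j)) / INR n) - RInt g (-1) (grid n p))
    <= INR p * K / (2 * INR n ^ 2).
Proof.
  intros Hn Hg. assert (Hn' : 1 <= INR n) by (apply (le_INR 1); auto).
  induction p.
  - unfold grid. simpl. replace (-1 + 0 / INR n) with (-1) by (field; lra).
    rewrite RInt_point, Rminus_0_r, Rabs_R0. lra.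
  - assert (Hcell := right_endpoint_error g K (grid n p) (grid n (S p))).
    pose proof (grid_S n p Hn) as Hstep. rewrite Hstep in Hcell.
    assert (0 < / INR n) by (apply Rinv_0_lt_compat; lra).
    specialize (Hcell ltac:(lra) Hg).
    rewrite <- (RInt_Chasles g (-1) (grid n p) (grid n (S p)))
      by apply (ex_RInt_lipschitz g K), Hg.
    change plus with Rplus. simpl sumN.
    replace (sumN p (fun j => g (grid n (S j)) / INR n) + g (grid n (S p)) / INR n
             - (RInt g (-1) (grid n p) + RInt g (grid n p) (grid n (S p))))
      with ((sumN p (fun j => g (grid n (S j)) / INR n) - RInt g (-1) (grid n p))
            + (/ INR n * g (grid n (S p)) - RInt g (grid n p) (grid n (S p)))) by (field; lra).
    eapply Rle_trans; [apply Rabs_triang|].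
    replace (INR (S p) * K / (2 * INR n ^ 2))
      with (INR p * K / (2 * INR n ^ 2) + K * (/ INR n) ^ 2 / 2) by (rewrite S_INR; field; lra).
    lra.
Qed.

Lemma RInt_le_upper g a b c :
  a <= b <= c -> (forall u v, ex_RInt g u v) -> (forall x, 0 <= g x) ->
  RInt g a b <= RInt g a c.
Proof.
  intros Habc Hi Hg.
  assert (Hsplit : RInt g a c = RInt g a b + RInt g b c)
    by (symmetry; exact (RInt_Chasles (V := R_CompleteNormedModule) g a b c (Hi _ _) (Hi _ _))).
  assert (0 <= RInt g b c) by (apply RInt_ge_0; auto; lra).
  lra.
Qed.

Definition diff_factor_bound (I Kr Kd E n N : R) : R :=
  I + N * Kr / (2 * n ^ 2) + N * (N + 1) * Kd / (4 * n ^ 3) + N * (N + 1) * E / 2.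

Section DiffFactorBound.

Variables (rho : R -> R) (Kr Kd : R).
Hypothesis rho_lipschitz : lipschitz rho Kd.
Hypothesis rho_bounded : forall x, Rabs (rho x) <= Kr.

Let ex_RInt_rho u v : ex_RInt rho u v.
Proof. exact (ex_RInt_lipschitz rho Kd u v rho_lipschitz). Qed.

Let primitive_lipschitz : lipschitz (fun t => RInt rho (-1) t) Kr.
Proof. exact (RInt_lipschitz rho Kr (-1) rho_bounded ex_RInt_rho). Qed.

Variables (n N : nat) (A0 A1 e : nat -> R) (E : R).
Hypothesis n_pos : (1 <= n)%nat.
Hypothesis N_le : (N <= 2 * n)%nat.
Hypothesis mask_diff : forall k, (k < N)%nat ->
  A0 k - A1 k = rho (grid n (S k)) / INR n ^ 2 + e k.
Hypothesis e_bound : forall k, (k < N)%nat -> Rabs (e k) <= E.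

(* The partial sums of [A0 - A1] are [1/n] times Riemann sums of [rho]. *)
Lemma partial_diff_sum_le k : (k < N)%nat ->
  Rabs (sumN (S k) (fun j => A0 j - A1 j))
  <= Rabs (RInt rho (-1) (grid n (S k))) / INR n
     + INR (S k) * Kd / (2 * INR n ^ 3) + INR (S k) * E.
Proof.
  intros Hk. assert (Hn : 1 <= INR n) by (apply (le_INR 1), n_pos).
  rewrite (sumN_ext (S k) _ (fun j => / INR n * (rho (grid n (S j)) / INR n) + e j))
    by (intros j Hj; rewrite mask_diff by lia; field; lra).
  rewrite sumN_plus, sumN_mult_l.
  set (Q := sumN (S k) (fun j => rho (grid n (S j)) / INR n)).
  set (I := RInt rho (-1) (grid n (S k))).
  pose proof (riemann_sum_error rho Kd n (S k) n_pos rho_lipschitz) as HQ. fold Q I in HQ.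
  assert (He : Rabs (sumN (S k) e) <= INR (S k) * E).
  { eapply Rle_trans; [apply Rabs_sumN|]. rewrite <- sumN_const.
    apply sumN_le. intros; apply e_bound; lia. }
  assert (Hinv : 0 < / INR n) by (apply Rinv_0_lt_compat; lra).
  replace (/ INR n * Q + sumN (S k) e)
    with (/ INR n * I + / INR n * (Q - I) + sumN (S k) e) by ring.
  eapply Rle_trans; [eapply Rle_trans; [apply Rabs_triang|apply Rplus_le_compat_r, Rabs_triang]|].
  rewrite !Rabs_mult, Rabs_inv, Rabs_pos_eq by lra.
  apply Rmult_le_compat_l with (r := / INR n) in HQ; [|lra].
  replace (INR (S k) * Kd / (2 * INR n ^ 3)) with (/ INR n * (INR (S k) * Kd / (2 * INR n ^ 2)))
    by (field; lra).
  unfold Rdiv at 1. lra.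
Qed.

Lemma diff_factor_le :
  diff_factor N A0 A1
  <= diff_factor_bound (RInt (fun t => Rabs (RInt rho (-1) t)) (-1) 1) Kr Kd E (INR n) (INR N).
Proof.
  assert (Hn : 1 <= INR n) by (apply (le_INR 1), n_pos).
  unfold diff_factor, diff_factor_bound. eapply Rle_trans; [apply sumN_le, partial_diff_sum_le|].
  rewrite !sumN_plus.
  rewrite (sumN_ext N (fun k => INR (S k) * Kd / _) (fun k => Kd / (2 * INR n ^ 3) * INR (S k)))
    by (intros; field; lra).
  rewrite (sumN_ext N (fun k => INR (S k) * E) (fun k => E * INR (S k))) by (intros; ring).
  rewrite !sumN_mult_l, sumN_INR_S.
  set (absP t := Rabs (RInt rho (-1) t)).
  assert (HR := riemann_sum_error absP Kr n N n_pos (lipschitz_abs _ _ primitive_lipschitz)).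
  apply Rabs_le_between in HR.
  assert (Hupper : RInt absP (-1) (grid n N) <= RInt absP (-1) 1).
  { apply RInt_le_upper.
    - exact (grid_in_I n N n_pos N_le).
    - intros u v. apply (ex_RInt_lipschitz _ Kr), lipschitz_abs, primitive_lipschitz.
    - intros x. apply Rabs_pos. }
  replace (Kd / (2 * INR n ^ 3) * (INR N * (INR N + 1) / 2))
    with (INR N * (INR N + 1) * Kd / (4 * INR n ^ 3)) by (field; lra).
  replace (E * (INR N * (INR N + 1) / 2)) with (INR N * (INR N + 1) * E / 2) by field.
  unfold absP in *. lra.
Qed.

End DiffFactorBound.

(* Functions on [-1, 1] are extended by constants, so that Lipschitz and Riemann-sum
   estimates can be stated on all of R. *)
Definition clamp (x : R) : R := Rmax (-1) (Rmin 1 x).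

Lemma clamp_in_I x : in_I (clamp x).
Proof. unfold clamp, in_I, Rmax, Rmin. repeat destruct Rle_dec; lra. Qed.

Lemma clamp_id x : in_I x -> clamp x = x.
Proof. unfold clamp, in_I, Rmax, Rmin. repeat destruct Rle_dec; lra. Qed.

Lemma clamp_lipschitz : lipschitz clamp 1.
Proof.
  intros x y. rewrite Rmult_1_l. unfold clamp, Rmax, Rmin.
  repeat destruct Rle_dec; unfold Rabs; repeat destruct Rcase_abs; lra.
Qed.

Lemma continuous_within_of_deriv D f x l :
  has_deriv_within D f x l -> continuous_within D f x.
Proof.
  intros H e He. destruct (H 1 Rlt_0_1) as [d [Hd Hy]].
  assert (Hl : 0 <= Rabs l) by apply Rabs_pos.
  exists (Rmin d (e / (Rabs l + 1))). split.
  { apply Rmin_pos; [exact Hd|apply Rdiv_lt_0_compat; lra]. }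
  intros y Dy Hxy.
  assert (H1 : Rabs (y - x) < d) by (eapply Rlt_le_trans; [apply Hxy|apply Rmin_l]).
  assert (H2 : Rabs (y - x) <= e / (Rabs l + 1))
    by (left; eapply Rlt_le_trans; [apply Hxy|apply Rmin_r]).
  specialize (Hy y Dy H1).
  replace (f y - f x) with ((f y - f x - l * (y - x)) + l * (y - x)) by ring.
  eapply Rle_trans; [apply Rabs_triang|]. rewrite Rabs_mult.
  apply Rle_trans with ((Rabs l + 1) * Rabs (y - x)); [nra|].
  apply Rle_trans with ((Rabs l + 1) * (e / (Rabs l + 1))); [apply Rmult_le_compat_l; lra|].
  right; field; lra.
Qed.

Lemma continuity_pt_clamp g :
  (forall x, in_I x -> continuous_within in_I g x) ->
  forall z, continuity_pt (fun x => g (clamp x)) z.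
Proof.
  intros H z e He. destruct (H (clamp z) (clamp_in_I z) (e / 2)) as [d [Hd Hy]]; [lra|].
  exists d. split; [exact Hd|]. intros y [_ Hyz]. simpl in *. unfold R_dist in *.
  assert (Rabs (g (clamp y) - g (clamp z)) <= e / 2); [|lra].
  apply Hy; [apply clamp_in_I|]. eapply Rle_lt_trans; [|exact Hyz].
  rewrite <- (Rmult_1_l (Rabs (y - z))). apply clamp_lipschitz.
Qed.

Lemma bounded_on_I g :
  (forall x, in_I x -> continuous_within in_I g x) ->
  exists K, forall x, in_I x -> Rabs (g x) <= K.
Proof.
  intros H.
  destruct (continuity_ab_maj (fun x => Rabs (g (clamp x))) (-1) 1) as [M [HM _]]; [lra| |].
  - intros c _. apply (continuity_pt_comp (fun x => g (clamp x)) Rabs).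
    + apply continuity_pt_clamp, H.
    + apply Rcontinuity_abs.
  - exists (Rabs (g (clamp M))). intros x Hx. rewrite <- (clamp_id x Hx). apply HM, Hx.
Qed.

Lemma bound_on_I_nonneg g K : (forall x, in_I x -> Rabs (g x) <= K) -> 0 <= K.
Proof. intros H. eapply Rle_trans; [apply Rabs_pos|apply (H 0)]. unfold in_I; lra. Qed.

Lemma is_derive_clamp r dr z :
  (forall x, in_I x -> has_deriv_within in_I r x (dr x)) ->
  -1 < z < 1 -> is_derive (fun x => r (clamp x)) z (dr z).
Proof.
  intros H Hz. apply is_derive_Reals. intros e He.
  destruct (H z ltac:(unfold in_I; lra) (e / 2) ltac:(lra)) as [d [Hd Hy]].
  assert (Hp : 0 < Rmin d (Rmin (1 - z) (1 + z))) by (repeat apply Rmin_pos; lra).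
  exists (mkposreal _ Hp). simpl. intros h Hh0 Hh.
  assert (Hhd : Rabs h < d) by (eapply Rlt_le_trans; [apply Hh|apply Rmin_l]).
  assert (Hhz : Rabs h < Rmin (1 - z) (1 + z)) by (eapply Rlt_le_trans; [apply Hh|apply Rmin_r]).
  assert (Iz : in_I (z + h)).
  { pose proof (Rmin_l (1 - z) (1 + z)). pose proof (Rmin_r (1 - z) (1 + z)).
    apply Rabs_def2 in Hhz. unfold in_I. lra. }
  rewrite (clamp_id (z + h) Iz), (clamp_id z) by (unfold in_I; lra).
  specialize (Hy (z + h) Iz). replace (z + h - z) with h in Hy by ring. specialize (Hy Hhd).
  replace ((r (z + h) - r z) / h - dr z) with ((r (z + h) - r z - dr z * h) / h) by (field; auto).
  assert (0 < Rabs h) by (apply Rabs_pos_lt; auto).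
  unfold Rdiv. rewrite Rabs_mult, Rabs_inv.
  apply Rle_lt_trans with (e / 2 * Rabs h * / Rabs h).
  - apply Rmult_le_compat_r; [left; apply Rinv_0_lt_compat|]; auto.
  - rewrite Rmult_assoc, Rinv_r by lra. lra.
Qed.

Lemma lipschitz_clamp_C1 r dr Kd :
  C1_on_I r dr -> (forall x, in_I x -> Rabs (dr x) <= Kd) ->
  lipschitz (fun x => r (clamp x)) Kd.
Proof.
  intros [Hd _] HK.
  assert (Hcont := continuity_pt_clamp r
                     (fun x Hx => continuous_within_of_deriv _ _ _ _ (Hd x Hx))).
  assert (Hon_I : forall a b, in_I a -> in_I b -> Rabs (r a - r b) <= Kd * Rabs (a - b)).
  { intros a b Ia Ib.
    destruct (MVT_gen (fun x => r (clamp x)) b a dr) as [c [Hcab Hmvt]].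
    - intros x Hx. apply is_derive_clamp; auto. unfold in_I, Rmin, Rmax in *.
      destruct Rle_dec; lra.
    - intros; apply Hcont.
    - rewrite (clamp_id a Ia), (clamp_id b Ib) in Hmvt. rewrite Hmvt, Rabs_mult.
      apply Rmult_le_compat_r; [apply Rabs_pos|apply HK].
      unfold in_I, Rmin, Rmax in *. destruct Rle_dec; lra. }
  intros x y. eapply Rle_trans; [apply Hon_I; apply clamp_in_I|].
  apply Rmult_le_compat_l; [exact (bound_on_I_nonneg dr Kd HK)|].
  rewrite <- (Rmult_1_l (Rabs (x - y))). apply clamp_lipschitz.
Qed.

Lemma RInt_abs_primitive_clamp r :
  RInt (fun t => Rabs (RInt r (-1) t)) (-1) 1
  = RInt (fun t => Rabs (RInt (fun x => r (clamp x)) (-1) t)) (-1) 1.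
Proof.
  apply RInt_ext. intros x Hx.
  rewrite Rmin_left, Rmax_right in Hx by lra.
  f_equal. apply RInt_ext. intros y Hy.
  rewrite Rmin_left, Rmax_right in Hy by lra.
  rewrite clamp_id; [reflexivity|unfold in_I; lra].
Qed.

Lemma exists_nat_gt X : exists n : nat, X < INR n.
Proof.
  destruct (archimed X) as [Hup _]. exists (Z.to_nat (up X)).
  rewrite INR_IZR_INZ. apply Rlt_le_trans with (IZR (up X)); [lra|apply IZR_le; lia].
Qed.

Lemma Rpower_neg_lt_eventually beta t :
  0 < beta -> 0 < t -> exists y, 0 < y /\ forall x, y < x -> Rpower x (- beta) < t.
Proof.
  intros Hb Ht. exists (Rpower t (- / beta)). split; [apply exp_pos|].
  intros x Hx. assert (Hy : 0 < Rpower t (- / beta)) by apply exp_pos.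
  rewrite Rpower_Ropp. rewrite <- (Rinv_inv t).
  apply Rinv_lt_contravar.
  - apply Rmult_lt_0_compat; [apply Rinv_0_lt_compat, Ht|apply exp_pos].
  - replace (/ t) with (Rpower (Rpower t (- / beta)) beta).
    + apply Rlt_Rpower_l; lra.
    + rewrite Rpower_mult. replace (- / beta * beta) with (- (1)) by (field; lra).
      rewrite Rpower_Ropp, Rpower_1 by exact Ht. reflexivity.
Qed.

Lemma diff_factor_bound_le I Kr Kd E n N :
  1 <= n -> 0 <= N <= 2 * n -> 0 <= Kr -> 0 <= Kd -> 0 <= E ->
  diff_factor_bound I Kr Kd E n N <= I + (Kr + 2 * Kd) / n + 3 * (n ^ 2 * E).
Proof.
  intros Hn HN Hr Hd HE. unfold diff_factor_bound.
  set (u := / n). assert (Hu : n * u = 1) by (unfold u; field; lra).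
  assert (Hu0 : 0 < u) by (unfold u; apply Rinv_0_lt_compat; lra).
  replace (N * Kr / (2 * n ^ 2)) with ((N * u) * u * Kr / 2) by (unfold u; field; lra).
  replace (N * (N + 1) * Kd / (4 * n ^ 3))
    with ((N * u) * ((N + 1) * u) * (u * Kd) / 4) by (unfold u; field; lra).
  replace ((Kr + 2 * Kd) / n) with (u * Kr + 2 * (u * Kd)) by (unfold u; field; lra).
  assert (A0 : 0 <= N * u <= 2) by nra.
  assert (A1 : 0 <= (N + 1) * u <= 3) by nra.
  assert (B1 : (N * u) * (u * Kr) <= 2 * (u * Kr)) by (apply Rmult_le_compat_r; nra).
  assert (B2 : (N * u) * ((N + 1) * u) * (u * Kd) <= 6 * (u * Kd))
    by (apply Rmult_le_compat_r; nra).
  assert (B3 : N * (N + 1) * E <= 6 * n ^ 2 * E) by (apply Rmult_le_compat_r; nra).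
  nra.
Qed.

Lemma diff_factor_bound_eventually_lt I Kr Kd mu alpha :
  I < 1 -> 0 <= Kr -> 0 <= Kd -> 0 < mu -> 2 < alpha ->
  exists n0 : nat, forall n : nat, (n0 < n)%nat -> forall N, 0 <= N <= 2 * INR n ->
    diff_factor_bound I Kr Kd (mu * Rpower (INR n) (- alpha)) (INR n) N < 1.
Proof.
  intros HI HKr HKd Hmu Halpha. set (c := (1 - I) / 2).
  destruct (Rpower_neg_lt_eventually (alpha - 2) (c / (3 * mu))) as [y [Hy Hpow]].
  { lra. } { apply Rdiv_lt_0_compat; unfold c; lra. }
  destruct (exists_nat_gt (Rmax 1 (Rmax ((Kr + 2 * Kd) / c) y))) as [n0 Hn0].
  exists n0. intros n Hn N HN. apply lt_INR in Hn.
  pose proof (Rmax_l 1 (Rmax ((Kr + 2 * Kd) / c) y)).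
  pose proof (Rmax_r 1 (Rmax ((Kr + 2 * Kd) / c) y)).
  pose proof (Rmax_l ((Kr + 2 * Kd) / c) y). pose proof (Rmax_r ((Kr + 2 * Kd) / c) y).
  eapply Rle_lt_trans.
  { apply diff_factor_bound_le; auto; [lra|]. apply Rmult_le_pos; [lra|left; apply exp_pos]. }
  assert (Hsmooth : (Kr + 2 * Kd) / INR n < c).
  { assert (Hq : (Kr + 2 * Kd) / c < INR n) by lra.
    apply Rlt_div_l in Hq; [|unfold c; lra]. apply Rlt_div_l; lra. }
  assert (Hnoise : 3 * (INR n ^ 2 * (mu * Rpower (INR n) (- alpha))) < c).
  { replace (INR n ^ 2 * (mu * Rpower (INR n) (- alpha)))
      with (mu * Rpower (INR n) (- (alpha - 2))).
    - specialize (Hpow (INR n) ltac:(lra)).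
      apply Rmult_lt_compat_l with (r := 3 * mu) in Hpow; [|lra].
      replace (3 * mu * (c / (3 * mu))) with c in Hpow by (field; lra). lra.
    - replace (- (alpha - 2)) with (INR 2 + - alpha) by (simpl; ring).
      rewrite Rpower_plus, Rpower_pow by lra. ring. }
  unfold c in *. lra.
Qed.

Lemma quadratic_pos_of_gt_root c B K x :
  0 < c -> 0 <= B ^ 2 - 4 * c * K -> (sqrt (B ^ 2 - 4 * c * K) + B) / (2 * c) < x ->
  0 < c * x ^ 2 - B * x + K.
Proof.
  intros Hc HD Hx.
  assert (Hlt : sqrt (B ^ 2 - 4 * c * K) < 2 * c * x - B).
  { apply Rlt_div_l in Hx; lra. }
  pose proof (sqrt_pos (B ^ 2 - 4 * c * K)). pose proof (sqrt_sqrt _ HD).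
  assert (B ^ 2 - 4 * c * K < (2 * c * x - B) ^ 2) by nra.
  nra.
Qed.

Lemma diff_factor_bound_lt_odd I nr ndr mu n :
  1 <= n -> 0 <= nr -> 0 <= ndr ->
  0 < (1 - I) * n ^ 2 - (nr + 2 * (mu + ndr)) * n + (mu + ndr) ->
  diff_factor_bound I nr ndr (mu * / n ^ 3) n (2 * n - 1) < 1.
Proof.
  intros Hn Hr Hd Hq. unfold diff_factor_bound.
  replace (I + (2 * n - 1) * nr / (2 * n ^ 2) + (2 * n - 1) * (2 * n - 1 + 1) * ndr / (4 * n ^ 3)
           + (2 * n - 1) * (2 * n - 1 + 1) * (mu * / n ^ 3) / 2)
    with (I + ((2 * n - 1) * nr / 2 + (2 * n - 1) * ndr / 2 + (2 * n - 1) * mu) / n ^ 2)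
    by (field; lra).
  assert ((2 * n - 1) * nr / 2 <= n * nr) by lra.
  assert ((2 * n - 1) * ndr / 2 <= (2 * n - 1) * ndr) by nra.
  assert ((2 * n - 1) * nr / 2 + (2 * n - 1) * ndr / 2 + (2 * n - 1) * mu < (1 - I) * n ^ 2)
    by lra.
  assert (((2 * n - 1) * nr / 2 + (2 * n - 1) * ndr / 2 + (2 * n - 1) * mu) / n ^ 2 < 1 - I);
    [|lra].
  apply Rmult_lt_reg_r with (n ^ 2); [nra|].
  unfold Rdiv. rewrite Rmult_assoc, Rinv_l by nra. lra.
Qed.

Lemma diff_factor_bound_lt_even I nr ndr mu n :
  1 <= n -> 0 <= nr -> 0 <= ndr ->
  0 < (1 - I) * n ^ 2 - (nr + 2 * (mu + ndr)) * n - mu ->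
  diff_factor_bound I nr ndr (mu * / n ^ 3) n (2 * n) < 1.
Proof.
  intros Hn Hr Hd Hq. unfold diff_factor_bound.
  replace (I + (2 * n) * nr / (2 * n ^ 2) + (2 * n) * (2 * n + 1) * ndr / (4 * n ^ 3)
           + (2 * n) * (2 * n + 1) * (mu * / n ^ 3) / 2)
    with (I + (n * nr + (2 * n + 1) * ndr / 2 + (2 * n + 1) * mu) / n ^ 2) by (field; lra).
  assert ((2 * n + 1) * ndr / 2 <= 2 * n * ndr) by nra.
  assert (n * nr + (2 * n + 1) * ndr / 2 + (2 * n + 1) * mu < (1 - I) * n ^ 2) by lra.
  assert ((n * nr + (2 * n + 1) * ndr / 2 + (2 * n + 1) * mu) / n ^ 2 < 1 - I); [|lra].
  apply Rmult_lt_reg_r with (n ^ 2); [nra|].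
  unfold Rdiv. rewrite Rmult_assoc, Rinv_l by nra. lra.
Qed.

Section Theorem5p4.

Variables (L : nat -> Z) (a0 a1 : nat -> Z -> R) (r dr : R -> R)
  (alpha mu : R) (eps : nat -> Z -> R).
Hypothesis HL : forall n : nat, (1 <= n)%nat ->
  L n = (Z.of_nat n - 1)%Z \/ L n = Z.of_nat n.
Hypothesis Hsym0 : forall n : nat, (1 <= n)%nat -> forall l : Z,
  (1 - Z.of_nat n <= l <= L n)%Z -> a0 n l = a0 n (L n + 1 - Z.of_nat n - l)%Z.
Hypothesis Hsym1 : forall n : nat, (1 <= n)%nat -> forall l : Z,
  (1 - Z.of_nat n <= l <= L n + 1)%Z -> a1 n l = a1 n (L n + 2 - Z.of_nat n - l)%Z.
Hypothesis Hconst0 : forall n : nat, (1 <= n)%nat -> sumZ (1 - Z.of_nat n) (L n) (a0 n) = 1.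
Hypothesis Hconst1 : forall n : nat, (1 <= n)%nat -> sumZ (1 - Z.of_nat n) (L n + 1) (a1 n) = 1.
Hypothesis Hr : C1_on_I r dr.
Hypothesis Halpha : 2 < alpha.
Hypothesis Hmu : 0 < mu.
Hypothesis Hdiff : forall n : nat, (1 <= n)%nat -> forall j : Z,
  (1 - Z.of_nat n <= j <= L n)%Z ->
  a0 n j - a1 n j = r (IZR j / INR n) * / (INR n ^ 2) + eps n j.
Hypothesis Heps : forall n : nat, (1 <= n)%nat -> forall j : Z,
  (1 - Z.of_nat n <= j <= L n)%Z -> Rabs (eps n j) <= mu * Rpower (INR n) (- alpha).
Hypothesis HR1 : RInt (fun t => Rabs (RInt r (-1) t)) (-1) 1 < 1.

(* The even mask of [S_{a^n}] has [L n + n] taps, starting at [1 - n]. *)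
Let taps (n : nat) : nat := Z.to_nat (L n + Z.of_nat n).

Let Z_of_taps n : (1 <= n)%nat -> Z.of_nat (taps n) = (L n + Z.of_nat n)%Z.
Proof. intros Hn. unfold taps. destruct (HL n Hn); lia. Qed.

Let INR_taps n : (1 <= n)%nat -> INR (taps n) = IZR (L n + Z.of_nat n).
Proof. intros Hn. rewrite INR_IZR_INZ, Z_of_taps by exact Hn. reflexivity. Qed.

Let taps_range n : (1 <= n)%nat -> 0 <= INR (taps n) <= 2 * INR n.
Proof.
  intros Hn. assert (1 <= INR n) by (apply (le_INR 1), Hn). rewrite INR_taps by exact Hn.
  destruct (HL n Hn) as [-> | ->]; rewrite plus_IZR, ?minus_IZR, <- !INR_IZR_INZ; lra.
Qed.

Lemma convergent_of_diff_factor_bound Kr Kd n :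
  (1 <= n)%nat ->
  (forall x, in_I x -> Rabs (r x) <= Kr) -> (forall x, in_I x -> Rabs (dr x) <= Kd) ->
  diff_factor_bound (RInt (fun t => Rabs (RInt r (-1) t)) (-1) 1) Kr Kd
    (mu * Rpower (INR n) (- alpha)) (INR n) (INR (taps n)) < 1 ->
  convergent_scheme (subdiv (1 - Z.of_nat n) (L n) (L n + 1) (a0 n) (a1 n)).
Proof.
  intros Hn Hb Hbd Hlt. pose proof (Z_of_taps n Hn) as Htaps. pose proof (HL n Hn) as HLn.
  assert (Hn' : 1 <= INR n) by (apply (le_INR 1), Hn).
  apply (subdiv_convergent _ _ (taps n)).
  - lia.
  - rewrite <- (Hconst0 n Hn), sumZ_sumN. f_equal. lia.
  - rewrite <- (Hconst1 n Hn), sumZ_sumN. f_equal. lia.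
  - intros k Hk. rewrite (Hsym0 n Hn (1 - Z.of_nat n + Z.of_nat k)%Z) by lia. f_equal. lia.
  - intros k Hk. rewrite (Hsym1 n Hn (1 - Z.of_nat n + Z.of_nat k)%Z) by lia. f_equal. lia.
  - eapply Rle_lt_trans; [|exact Hlt]. rewrite RInt_abs_primitive_clamp.
    apply (diff_factor_le (fun x => r (clamp x)) Kr Kd (lipschitz_clamp_C1 r dr Kd Hr Hbd)
             (fun x => Hb _ (clamp_in_I x)) n (taps n) _ _
             (fun k => eps n (1 - Z.of_nat n + Z.of_nat k)%Z) _ Hn); [lia| |].
    + intros k Hk. rewrite Hdiff by (auto; lia).
      assert (Hgrid : IZR (1 - Z.of_nat n + Z.of_nat k) / INR n = grid n (S k)).
      { unfold grid. rewrite plus_IZR, minus_IZR, <- !INR_IZR_INZ, S_INR. field. lra. }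
      rewrite Hgrid, clamp_id; [reflexivity|apply grid_in_I; lia].
    + intros k Hk. apply Heps; [exact Hn|lia].
Qed.

Lemma eventually_convergent :
  exists n0 : nat, forall n : nat, (n0 < n)%nat ->
    convergent_scheme (subdiv (1 - Z.of_nat n) (L n) (L n + 1) (a0 n) (a1 n)).
Proof.
  pose proof Hr as [Hd Hc].
  destruct (bounded_on_I r) as [Kr Hb].
  { intros x Hx. apply (continuous_within_of_deriv _ _ _ _ (Hd x Hx)). }
  destruct (bounded_on_I dr Hc) as [Kd Hbd].
  destruct (diff_factor_bound_eventually_lt (RInt (fun t => Rabs (RInt r (-1) t)) (-1) 1)
              Kr Kd mu alpha) as [n0 Hn0];
    [exact HR1|apply (bound_on_I_nonneg r), Hb|apply (bound_on_I_nonneg dr), Hbd|exact Hmu|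
     exact Halpha|].
  exists n0. intros n Hn.
  assert (Hn1 : (1 <= n)%nat) by lia.
  apply (convergent_of_diff_factor_bound Kr Kd n Hn1 Hb Hbd), Hn0, taps_range; assumption.
Qed.

Lemma explicit_threshold_convergent :
  alpha = 3 ->
  forall nr ndr : R, is_max_abs_on_I r nr -> is_max_abs_on_I dr ndr ->
  let NR := RInt (fun t => Rabs (RInt r (-1) t)) (-1) 1 in
  let B := nr + 2 * (mu + ndr) in
  forall n : nat, (1 <= n)%nat ->
    ((L n = (Z.of_nat n - 1)%Z ->
      0 <= B ^ 2 + 4 * (NR - 1) * (mu + ndr) ->
      (sqrt (B ^ 2 + 4 * (NR - 1) * (mu + ndr)) + B) / (2 * (1 - NR)) < INR n ->
      convergent_scheme (subdiv (1 - Z.of_nat n) (L n) (L n + 1) (a0 n) (a1 n)))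
     /\
     (L n = Z.of_nat n ->
      (sqrt (B ^ 2 + 4 * (1 - NR) * mu) + B) / (2 * (1 - NR)) < INR n ->
      convergent_scheme (subdiv (1 - Z.of_nat n) (L n) (L n + 1) (a0 n) (a1 n)))).
Proof.
  intros Ha nr ndr [_ Hnr] [_ Hndr] NR B n Hn.
  assert (Hn' : 1 <= INR n) by (apply (le_INR 1), Hn).
  pose proof (bound_on_I_nonneg r nr Hnr) as Hnr0.
  pose proof (bound_on_I_nonneg dr ndr Hndr) as Hndr0.
  assert (HNR : 0 < 1 - NR) by (unfold NR; lra).
  assert (Hpow3 : Rpower (INR n) (Ropp 3) = / INR n ^ 3).
  { rewrite Rpower_Ropp. replace 3 with (INR 3) by (simpl; ring).
    rewrite Rpower_pow by lra. reflexivity. }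
  split.
  - intros HLn HD Hroot. apply (convergent_of_diff_factor_bound nr ndr n Hn Hnr Hndr).
    rewrite INR_taps, HLn, Ha, Hpow3, plus_IZR, minus_IZR, <- INR_IZR_INZ by exact Hn.
    replace (INR n - 1 + INR n) with (2 * INR n - 1) by ring.
    apply diff_factor_bound_lt_odd; auto.
    apply (quadratic_pos_of_gt_root (1 - NR) B (mu + ndr) (INR n) HNR);
      replace (B ^ 2 - 4 * (1 - NR) * (mu + ndr)) with (B ^ 2 + 4 * (NR - 1) * (mu + ndr)) by ring;
      assumption.
  - intros HLn Hroot. apply (convergent_of_diff_factor_bound nr ndr n Hn Hnr Hndr).
    rewrite INR_taps, HLn, Ha, Hpow3, plus_IZR, <- INR_IZR_INZ by exact Hn.
    replace (INR n + INR n) with (2 * INR n) by ring.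
    apply diff_factor_bound_lt_even; auto.
    replace ((1 - NR) * INR n ^ 2 - B * INR n - mu)
      with ((1 - NR) * INR n ^ 2 - B * INR n + - mu) by ring.
    apply (quadratic_pos_of_gt_root (1 - NR) B (- mu) (INR n) HNR);
      replace (B ^ 2 - 4 * (1 - NR) * - mu) with (B ^ 2 + 4 * (1 - NR) * mu) by ring;
      [nra|assumption].
Qed.

End Theorem5p4.

Theorem theorem5p4
  (L : nat -> Z) (a0 a1 : nat -> Z -> R) (r dr : R -> R)
  (alpha mu : R) (eps : nat -> Z -> R)
  (HL : forall n : nat, (1 <= n)%nat ->
          L n = (Z.of_nat n - 1)%Z \/ L n = Z.of_nat n)
  (Hsym0 : forall n : nat, (1 <= n)%nat -> forall l : Z,
          (1 - Z.of_nat n <= l <= L n)%Z ->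
          a0 n l = a0 n (L n + 1 - Z.of_nat n - l)%Z)
  (Hsym1 : forall n : nat, (1 <= n)%nat -> forall l : Z,
          (1 - Z.of_nat n <= l <= L n + 1)%Z ->
          a1 n l = a1 n (L n + 2 - Z.of_nat n - l)%Z)
  (Hconst0 : forall n : nat, (1 <= n)%nat ->
          sumZ (1 - Z.of_nat n) (L n) (a0 n) = 1)
  (Hconst1 : forall n : nat, (1 <= n)%nat ->
          sumZ (1 - Z.of_nat n) (L n + 1) (a1 n) = 1)
  (Hr : C1_on_I r dr)
  (Halpha : 2 < alpha) (Hmu : 0 < mu)
  (Hdiff : forall n : nat, (1 <= n)%nat -> forall j : Z,
          (1 - Z.of_nat n <= j <= L n)%Z ->
          a0 n j - a1 n j = r (IZR j / INR n) * / (INR n ^ 2) + eps n j)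
  (Heps : forall n : nat, (1 <= n)%nat -> forall j : Z,
          (1 - Z.of_nat n <= j <= L n)%Z ->
          Rabs (eps n j) <= mu * Rpower (INR n) (- alpha))
  (HR1 : RInt (fun t => Rabs (RInt r (-1) t)) (-1) 1 < 1) :
  (exists n0 : nat, forall n : nat, (n0 < n)%nat ->
     convergent_scheme
       (subdiv (1 - Z.of_nat n) (L n) (L n + 1) (a0 n) (a1 n)))
  /\
  (alpha = 3 ->
   forall nr ndr : R, is_max_abs_on_I r nr -> is_max_abs_on_I dr ndr ->
   let NR := RInt (fun t => Rabs (RInt r (-1) t)) (-1) 1 in
   let B := nr + 2 * (mu + ndr) in
   forall n : nat, (1 <= n)%nat ->
     ((L n = (Z.of_nat n - 1)%Z ->
       0 <= B ^ 2 + 4 * (NR - 1) * (mu + ndr) ->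
       (sqrt (B ^ 2 + 4 * (NR - 1) * (mu + ndr)) + B) / (2 * (1 - NR)) < INR n ->
       convergent_scheme
         (subdiv (1 - Z.of_nat n) (L n) (L n + 1) (a0 n) (a1 n)))
      /\
      (L n = Z.of_nat n ->
       (sqrt (B ^ 2 + 4 * (1 - NR) * mu) + B) / (2 * (1 - NR)) < INR n ->
       convergent_scheme
         (subdiv (1 - Z.of_nat n) (L n) (L n + 1) (a0 n) (a1 n))))).
Proof.
  split.
  - eapply eventually_convergent; eassumption.
  - eapply explicit_threshold_convergent; eassumption.
Qed.
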